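(* Let $N_1\ge N_2$, $N_3$, $T$ be nonnegative integers with $T\ge N_1+N_3$. For $i\in\{1,2\}$ let $\tilde T_i$ be a maximizer over $T'\in\{N_i,\dots,T-N_3\}$ of $\min\left(\frac{T'+1-N_i}{T'+1},\frac{T-T'+1-N_3}{T-T'+1}\right)$. For all positive integers $A,B$, set $$k_1=A(T-\tilde T_1+1-N_3)(\tilde T_1+1-N_1),\quad k_2=B(T-\tilde T_2+1-N_3)(\tilde T_2+1-N_2),$$ $$n=\max\Big(A(\tilde T_1+1)(T-\tilde T_1+1-N_3),\;B(\tilde T_2+1)(T-\tilde T_2+1-N_3),\;A(T-\tilde T_1+1)(\tilde T_1+1-N_1)+B(T-\tilde T_2+1)(\tilde T_2+1-N_2)\Big).$$ Then the rate pair $(R_1,R_2)=(k_1/n,\,k_2/n)$ is achievable.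
   Context: Network: two sources, one relay, one destination; no direct source–destination link. Source $i\in\{1,2\}$ has messages $s_{t,i}\in\mathbb{F}^{k_i}$, $t\ge0$, over a finite field $\mathbb{F}$. A time-invariant $(n_1,n_2,n_3,k_1,k_2,T)_{\mathbb{F}}$ streaming code (unbounded memory): source $i$ sends at time $t$ a packet $x^{(1)}_{t,i}\in\mathbb{F}^{n_i}$, a fixed function of $s_{0,i},\dots,s_{t,i}$; a relay function $g$, the same at every time $t$, takes the packets received from both sources at times $t-T,\dots,t$ together with the relay's previously produced estimates of past source messages, and outputs a packet $x^{(2)}_t\in\mathbb{F}^{n_3}$ and estimates of $s_{t-T,1},s_{t-T,2}$; the destination outputs at time $t+T$ estimates $\hat s_{t,i}$ from its received packets up to time $t+T$. Each link is a packet erasure channel (received packet is the sent one or the erasure symbol $*$). An $N$-erasure sequence has exactly $N$ erased times; link source $i\to$relay suffers an arbitrary $N_i$-erasure sequence, relay$\to$destination an arbitrary $N_3$-erasure sequence. The code is $(N_1,N_2,N_3)$-achievable if $\hat s_{t,i}=s_{t,i}$ always. Rate pair: $R_i=k_i/n$, $n=\max(n_1,n_2,n_3)$; a rate pair is achievable if it is the rate pair of some $(N_1,N_2,N_3)$-achievable code (over some finite field). *)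

From HB Require Import structures.
From mathcomp Require Import all_boot all_order all_algebra.
Set Implicit Arguments. Unset Strict Implicit. Unset Printing Implicit Defensive.
Import Order.TTheory GRing.Theory Num.Theory.
Local Open Scope ring_scope.

(* An N-erasure sequence: exactly N erased times (e t = true means erased). *)
Definition erasure_seq (N : nat) (e : nat -> bool) : Prop :=
  exists l : seq nat, [/\ uniq l, size l = N & forall t, e t = (t \in l)].

Definition erase (A : Type) (e : nat -> bool) (x : nat -> A) (t : nat) : option A :=
  if e t then None else Some (x t).

(* A time-invariant (n1,n2,n3,k1,k2,T)_F streaming code (unbounded memory).
   - enc1/enc2 : source i maps the list [s_{0,i}; ...; s_{t,i}] to x^{(1)}_{t,i};
   - relay : the single (time-invariant) relay function g: from the list of
     received packet pairs at times max(0,t-T),...,t and the list of its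
     previously produced estimates (of s_{0,.},...,s_{t-T-1,.}) it outputs
     x^{(2)}_t and estimates of (s_{t-T,1}, s_{t-T,2});
   - dec : from the received packets at times 0..t+T the destination outputs
     the estimates of (s_{t,1}, s_{t,2}). *)
Record streaming_code (F : finFieldType) (n1 n2 n3 k1 k2 : nat) : Type := {
  enc1 : seq 'rV[F]_k1 -> 'rV[F]_n1;
  enc2 : seq 'rV[F]_k2 -> 'rV[F]_n2;
  relay : seq (option 'rV[F]_n1 * option 'rV[F]_n2) ->
          seq ('rV[F]_k1 * 'rV[F]_k2) -> 'rV[F]_n3 * ('rV[F]_k1 * 'rV[F]_k2);
  dec : seq (option 'rV[F]_n3) -> 'rV[F]_k1 * 'rV[F]_k2 }.

Section Semantics.
Variables (F : finFieldType) (n1 n2 n3 k1 k2 T : nat).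
Variable C : streaming_code F n1 n2 n3 k1 k2.
Variables (s1 : nat -> 'rV[F]_k1) (s2 : nat -> 'rV[F]_k2).
Variables (e1 e2 e3 : nat -> bool).

Definition src1_pkt (t : nat) : 'rV[F]_n1 := enc1 C (mkseq s1 t.+1).
Definition src2_pkt (t : nat) : 'rV[F]_n2 := enc2 C (mkseq s2 t.+1).

(* packets received by the relay at times max(0,t-T), ..., t *)
Definition relay_window (t : nat) : seq (option 'rV[F]_n1 * option 'rV[F]_n2) :=
  [seq (erase e1 src1_pkt u, erase e2 src2_pkt u) | u <- iota (t - T)%N (t - (t - T))%N.+1].

(* relay_est t = the relay's estimates produced before time t,
   i.e. estimates of the messages at times 0, ..., t-T-1 *)
Fixpoint relay_est (t : nat) : seq ('rV[F]_k1 * 'rV[F]_k2) :=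
  match t with
  | 0 => [::]
  | t'.+1 => if (T <= t')%N then rcons (relay_est t') (relay C (relay_window t') (relay_est t')).2
             else relay_est t'
  end.

Definition relay_pkt (t : nat) : 'rV[F]_n3 := (relay C (relay_window t) (relay_est t)).1.

Definition dest_est (t : nat) : 'rV[F]_k1 * 'rV[F]_k2 :=
  dec C (mkseq (erase e3 relay_pkt) (t + T)%N.+1).

End Semantics.

Definition code_achievable (F : finFieldType) (n1 n2 n3 k1 k2 T : nat)
    (C : streaming_code F n1 n2 n3 k1 k2) (N1 N2 N3 : nat) : Prop :=
  forall (s1 : nat -> 'rV[F]_k1) (s2 : nat -> 'rV[F]_k2) (e1 e2 e3 : nat -> bool),
    erasure_seq N1 e1 -> erasure_seq N2 e2 -> erasure_seq N3 e3 ->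
    forall t, dest_est T C s1 s2 e1 e2 e3 t = (s1 t, s2 t).

Definition rate_pair_achievable (N1 N2 N3 T : nat) (R1 R2 : rat) : Prop :=
  exists (F : finFieldType) (n1 n2 n3 k1 k2 : nat) (C : streaming_code F n1 n2 n3 k1 k2),
    code_achievable T C N1 N2 N3 /\
    let n := maxn n1 (maxn n2 n3) in
    R1 = (k1%:R / n%:R)%R /\ R2 = (k2%:R / n%:R)%R.

Definition obj (N N3 T T' : nat) : rat :=
  Num.min ((T' + 1 - N)%N%:R / (T' + 1)%N%:R)
          ((T - T' + 1 - N3)%N%:R / (T - T' + 1)%N%:R).

Definition is_maximizer (N N3 T Tt : nat) : Prop :=
  (N <= Tt <= T - N3)%N /\
  forall T', (N <= T' <= T - N3)%N -> (obj N N3 T T' <= obj N N3 T Tt)%R.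

From HB Require Import structures.
From mathcomp Require Import all_boot all_order all_algebra.
From mathcomp Require Import zify.
Set Implicit Arguments. Unset Strict Implicit. Unset Printing Implicit Defensive.
Import Order.TTheory GRing.Theory Num.Theory.
Local Open Scope ring_scope.

(* Source i protects its messages with a Reed-Solomon code of length T_i + 1 and
   dimension T_i + 1 - N_i, interleaved diagonally: row j of the packet sent at time u
   is the j-th codeword symbol of s_{u-j,i}.  The symbols of s_{t,i} thus travel in the
   packets sent at times t, ..., t + T_i, of which at most N_i are erased, so the relay
   knows s_{t,i} at time t + T_i.  It re-encodes s_{t,i} in the same way with a code of
   length T - T_i + 1 and dimension T - T_i + 1 - N_3, the two sources side by side in
   one relay packet, and the destination recovers s_{t,i} at time t + T.  Symbols of
   A (T - T_1 + 1 - N_3) resp. A (T_1 + 1 - N_1) field elements on the two hops make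
   both dimensions fit the message size k_1 (likewise with B for source 2).
   Over F_p with p > T the evaluation points 0, ..., T are distinct. *)

Section ReedSolomonEvaluation.
Variables (R : idomainType) (r m : nat).

Definition rs_eval (x : R) (M : 'M[R]_(r, m)) : 'rV[R]_m := \row_(c < r) x ^+ c *m M.

Lemma rs_eval_col (x : R) (M : 'M[R]_(r, m)) b :
  rs_eval x M 0 b = (rVpoly (col b M)^T).[x].
Proof.
rewrite (horner_coef_wide _ (size_poly _ _)) !mxE.
by apply: eq_bigr => c _; rewrite coef_rVpoly_ord !mxE mulrC.
Qed.

Lemma rs_eval_inj (xs : seq R) (M M' : 'M[R]_(r, m)) :
  uniq xs -> (r <= size xs)%N -> {in xs, forall x, rs_eval x M = rs_eval x M'} ->
  M = M'.
Proof.
move=> uniq_xs r_le eqM; apply/matrixP => c b.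
pose p := rVpoly (col b (M - M'))^T.
have p_root x : x \in xs -> root p x.
  move=> /eqM /(congr1 (fun v : 'rV_m => v 0 b)).
  by rewrite !rs_eval_col /root /p !linearB /= hornerD hornerN => ->; rewrite subrr.
have p0 : p = 0.
  apply: roots_geq_poly_eq0 uniq_xs _; first exact/allP.
  exact: leq_trans (size_poly _ _) r_le.
apply/eqP; rewrite -subr_eq0; apply/eqP.
by have := congr1 (fun q : {poly R} => q`_c) p0; rewrite coef_rVpoly_ord coef0 !mxE.
Qed.

End ReedSolomonEvaluation.

Section ReedSolomonDecoding.
Variables (F : finFieldType) (r m L : nat) (a : 'I_L -> F).

Definition rs_decode (obs : 'I_L -> option 'rV[F]_m) : 'M[F]_(r, m) :=
  odflt 0 [pick M | [forall j, if obs j is Some y then rs_eval (a j) M == y else true]].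

Lemma rs_decode_ok (obs : 'I_L -> option 'rV[F]_m) (M : 'M[F]_(r, m)) :
  injective a -> (forall j y, obs j = Some y -> y = rs_eval (a j) M) ->
  (r <= #|[pred j | obs j]|)%N -> rs_decode obs = M.
Proof.
move=> inj_a obsM r_le; rewrite /rs_decode; case: pickP => [M' /forallP fitM' | no_fit] /=.
  apply: (@rs_eval_inj _ _ _ [seq a j | j <- enum [pred j | obs j]]).
  - by rewrite (map_inj_uniq inj_a); apply: enum_uniq.
  - by rewrite size_map -cardE.
  move=> x /mapP [j]; rewrite mem_enum inE; case E: (obs j) => [y|] // _ ->.
  by have := fitM' j; rewrite E => /eqP ->; apply: obsM.
have /negP[] := negbT (no_fit M); apply/forallP => j.
by case E: (obs j) => [y|] //; rewrite (obsM _ _ E).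
Qed.

End ReedSolomonDecoding.

Lemma card_unerased_window N e t L : erasure_seq N e ->
  (L <= N + #|[pred j : 'I_L | ~~ e (t + j)%N]|)%N.
Proof.
case=> l [uniq_l size_l e_l].
have erased_le : (#|[pred j : 'I_L | e (t + j)%N]| <= N)%N.
  rewrite -size_l cardE -(size_map (fun j : 'I_L => t + j)%N).
  apply: uniq_leq_size => [|u /mapP [j]]; last by rewrite mem_enum inE e_l => ? ->.
  by rewrite map_inj_uniq ?enum_uniq // => i j /addnI /val_inj.
rewrite -[X in (X <= _)%N](card_ord L) -(cardC [pred j : 'I_L | e (t + j)%N]).
by apply: leq_add; [exact: erased_le | apply/eq_leq/eq_card].
Qed.

Section DiagonalInterleaving.
Variables (F : finFieldType) (L r m : nat).

Definition diag_decode (rcv : 'I_L -> option 'rV[F]_(L * m)) : 'M[F]_(r, m) :=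
  rs_decode r (fun j : 'I_L => j%:R) (fun j => omap (fun p => row j (vec_mx p)) (rcv j)).

Lemma diag_decode_erasure N e (y : nat -> 'rV[F]_(L * m)) t (M : 'M[F]_(r, m)) rcv :
  injective (fun j : 'I_L => j%:R : F) -> erasure_seq N e -> (r + N <= L)%N ->
  (forall j : 'I_L, row j (vec_mx (y (t + j)%N)) = rs_eval j%:R M) ->
  (forall j : 'I_L, rcv j = erase e y (t + j)) ->
  diag_decode rcv = M.
Proof.
move=> inj_pts eN rN yM rcvE; apply: rs_decode_ok => // [j z|].
  by rewrite rcvE /erase; case: (e _) => //= -[<-].
have := card_unerased_window t L eN.
have -> : #|[pred j : 'I_L | ~~ e (t + j)%N]| =
          #|[pred j | omap (fun p => row j (vec_mx p)) (rcv j)]|.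
  by apply: eq_card => j; rewrite !inE rcvE /erase; case: (e _).
lia.
Qed.

End DiagonalInterleaving.

Section Reshape.
Variables (R : Type) (k r m : nat) (E : k = (r * m)%N).

Definition reshape_mx (v : 'rV[R]_k) : 'M[R]_(r, m) := vec_mx (castmx (erefl 1%N, E) v).

Definition unreshape_mx (M : 'M[R]_(r, m)) : 'rV[R]_k :=
  castmx (erefl 1%N, esym E) (mxvec M).

Lemma reshape_mxK : cancel reshape_mx unreshape_mx.
Proof. by move=> v; rewrite /unreshape_mx /reshape_mx vec_mxK (castmxK (erefl 1%N)). Qed.

End Reshape.

Lemma nth_rev_map_iota (A : Type) (x0 : A) (f : nat -> A) a n d : (d < n)%N ->
  nth x0 (rev [seq f u | u <- iota a n]) d = f (a + n.-1 - d)%N.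
Proof.
move=> d_lt; rewrite nth_rev size_map size_iota // (nth_map 0%N) ?nth_iota ?size_iota;
  try lia.
by congr f; lia.
Qed.

Lemma map_omap_erase (A B : Type) (f : A -> B) e (x : nat -> A) n :
  map (omap f) (mkseq (erase e x) n) = mkseq (erase e (f \o x)) n.
Proof. by rewrite -map_comp; apply: eq_map => u; rewrite /erase /=; case: (e u). Qed.

Section DiagonalSource.
Variables (F : finFieldType) (Ts k rs ms : nat) (Es : k = (rs * ms)%N).

Definition src_enc (ss : seq 'rV[F]_k) : 'rV[F]_(Ts.+1 * ms) :=
  mxvec (\matrix_(j < Ts.+1) rs_eval j%:R (reshape_mx Es (nth 0 (rev ss) j))).

Lemma src_enc_row (s : nat -> 'rV[F]_k) t (j : 'I_Ts.+1) :
  row j (vec_mx (src_enc (mkseq s (t + j).+1))) = rs_eval j%:R (reshape_mx Es (s t)).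
Proof.
rewrite mxvecK rowK /mkseq nth_rev_map_iota; last lia.
by congr (rs_eval _ (reshape_mx _ (s _))); lia.
Qed.

End DiagonalSource.

Section RelayAndDestination.
Variables (F : finFieldType) (T Ts k rr mr : nat) (Er : k = (rr * mr)%N).
Hypothesis Ts_le : (Ts <= T)%N.
Hypothesis pts_inj : forall L, (L <= T.+1)%N -> injective (fun j : 'I_L => j%:R : F).

Local Notation Lr := (T - Ts).+1.

Definition dest_dec (l : seq (option 'rV[F]_(Lr * mr))) : 'rV[F]_k :=
  unreshape_mx Er (diag_decode rr (fun j : 'I_Lr => nth None (rev l) (T - Ts - j))).

Lemma dest_dec_ok N e (y : nat -> 'rV[F]_(Lr * mr)) (s : nat -> 'rV[F]_k) t :
  erasure_seq N e -> (rr + N <= Lr)%N ->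
  (forall j : 'I_Lr, row j (vec_mx (y (t + Ts + j)%N)) = rs_eval j%:R (reshape_mx Er (s t))) ->
  dest_dec (mkseq (erase e y) (t + T).+1) = s t.
Proof.
move=> eN rrN yE; rewrite /dest_dec (diag_decode_erasure _ eN rrN yE) ?reshape_mxK //.
- by apply: pts_inj; lia.
by move=> j; have j_lt := ltn_ord j; rewrite /mkseq nth_rev_map_iota; [congr erase; lia | lia].
Qed.

Variables (rs ms : nat) (Es : k = (rs * ms)%N).

(* Row [j] of the relay packet at time [tau] re-encodes [s (tau - Ts - j)], decoded
   from the source packets sent at times [tau - Ts - j + i], i.e. [Ts + j - i] steps ago. *)
Definition relay_enc (w : seq (option 'rV[F]_(Ts.+1 * ms))) : 'rV[F]_(Lr * mr) :=
  mxvec (\matrix_(j < Lr) rs_eval j%:R (reshape_mx Er (unreshape_mx Es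
    (diag_decode rs (fun i : 'I_Ts.+1 => nth None (rev w) (Ts + j - i)))))).

Lemma relay_enc_row N e (s : nat -> 'rV[F]_k) t (j : 'I_Lr) :
  erasure_seq N e -> (rs + N <= Ts.+1)%N ->
  row j (vec_mx (relay_enc [seq erase e (fun u => src_enc Ts Es (mkseq s u.+1)) u
                 | u <- iota (t + Ts + j - T) (t + Ts + j - (t + Ts + j - T)).+1]))
  = rs_eval j%:R (reshape_mx Er (s t)).
Proof.
move=> eN rsN; have j_lt := ltn_ord j; rewrite mxvecK rowK.
rewrite (diag_decode_erasure (y := fun u => src_enc Ts Es (mkseq s u.+1)) (t := t)
          (M := reshape_mx Es (s t)) _ eN rsN) ?reshape_mxK //.
- by apply: pts_inj; lia.
- by move=> i; apply: src_enc_row.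
by move=> i; have i_lt := ltn_ord i; rewrite nth_rev_map_iota; [congr erase; lia | lia].
Qed.

End RelayAndDestination.

Section TwoSourceCode.
Variables (F : finFieldType) (T : nat).
Variables (Ts1 k1 rs1 ms1 rr1 mr1 : nat).
Variables (Es1 : k1 = (rs1 * ms1)%N) (Er1 : k1 = (rr1 * mr1)%N).
Variables (Ts2 k2 rs2 ms2 rr2 mr2 : nat).
Variables (Es2 : k2 = (rs2 * ms2)%N) (Er2 : k2 = (rr2 * mr2)%N).

Definition two_source_code : streaming_code F (Ts1.+1 * ms1) (Ts2.+1 * ms2)
    ((T - Ts1).+1 * mr1 + (T - Ts2).+1 * mr2) k1 k2 := {|
  enc1 := src_enc Ts1 Es1;
  enc2 := src_enc Ts2 Es2;
  relay := fun w _ =>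
    (row_mx (relay_enc T Er1 Es1 (map fst w)) (relay_enc T Er2 Es2 (map snd w)), (0, 0));
  dec := fun l => (dest_dec Er1 (map (omap lsubmx) l), dest_dec Er2 (map (omap rsubmx) l)) |}.

Theorem two_source_code_achievable N1 N2 N3 :
  (forall L, (L <= T.+1)%N -> injective (fun j : 'I_L => j%:R : F)) ->
  (Ts1 <= T)%N -> (rs1 + N1 <= Ts1.+1)%N -> (rr1 + N3 <= (T - Ts1).+1)%N ->
  (Ts2 <= T)%N -> (rs2 + N2 <= Ts2.+1)%N -> (rr2 + N3 <= (T - Ts2).+1)%N ->
  code_achievable T two_source_code N1 N2 N3.
Proof.
move=> pts_inj Ts1_le rsN1 rrN1 Ts2_le rsN2 rrN2 s1 s2 e1 e2 e3 eN1 eN2 eN3 t.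
rewrite /dest_est; cbn [dec two_source_code]; rewrite !map_omap_erase; congr pair.
- apply: (dest_dec_ok Ts1_le pts_inj eN3 rrN1) => j.
  rewrite /= /relay_pkt row_mxKl /relay_window -map_comp.
  exact: (relay_enc_row Er1 Ts1_le pts_inj Es1 s1 t j eN1 rsN1).
apply: (dest_dec_ok Ts2_le pts_inj eN3 rrN2) => j.
rewrite /= /relay_pkt row_mxKr /relay_window -map_comp.
exact: (relay_enc_row Er2 Ts2_le pts_inj Es2 s2 t j eN2 rsN2).
Qed.

End TwoSourceCode.

Lemma Fp_natr_inj p L : prime p -> (L <= p)%N -> injective (fun j : 'I_L => j%:R : 'F_p).
Proof.
move=> p_prime L_le; have lt_p (i : 'I_L) : (i < p)%N := leq_trans (ltn_ord i) L_le.
move=> i j /(congr1 val); rewrite /= !val_Fp_nat // !modn_small ?lt_p //.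
exact: val_inj.
Qed.

Theorem lemma8 (N1 N2 N3 T : nat) (T1 T2 A B : nat) :
  (N2 <= N1)%N -> (N1 + N3 <= T)%N ->
  is_maximizer N1 N3 T T1 -> is_maximizer N2 N3 T T2 ->
  (0 < A)%N -> (0 < B)%N ->
  let k1 := (A * (T - T1 + 1 - N3) * (T1 + 1 - N1))%N in
  let k2 := (B * (T - T2 + 1 - N3) * (T2 + 1 - N2))%N in
  let n := maxn (A * (T1 + 1) * (T - T1 + 1 - N3))
             (maxn (B * (T2 + 1) * (T - T2 + 1 - N3))
                   (A * (T - T1 + 1) * (T1 + 1 - N1) + B * (T - T2 + 1) * (T2 + 1 - N2))) in
  rate_pair_achievable N1 N2 N3 T (k1%:R / n%:R)%R (k2%:R / n%:R)%R.
Proof.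
move=> _ N13_le [/andP [N1_le T1_le] _] [/andP [N2_le T2_le] _] _ _ k1 k2 n.
have [p T_lt_p p_prime] := prime_above T.
have Er1 : ((T1.+1 - N1) * (A * ((T - T1).+1 - N3)) =
             ((T - T1).+1 - N3) * (A * (T1.+1 - N1)))%N by lia.
have Er2 : ((T2.+1 - N2) * (B * ((T - T2).+1 - N3)) =
             ((T - T2).+1 - N3) * (B * (T2.+1 - N2)))%N by lia.
exists 'F_p, _, _, _, _, _, (two_source_code 'F_p T T1 (erefl _) Er1 T2 (erefl _) Er2).
split.
  apply: two_source_code_achievable; try lia.
  by move=> L L_le; apply: Fp_natr_inj; lia.
by split; congr (_%:R / _%:R); lia.
Qed.
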